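(* Let $k$ be a field of characteristic different from $2$ containing an element $i$ with $i^2=-1$, and let $k(u,v)$ be the rational function field in two variables. Then in the Brauer group $\mathrm{Br}(k(u,v))$ one has the equality of quaternion classes $$\big(uv(u^2-1)(v^2-1),\; u(v^2-1)(v^2-u^2)\big) = (u,v).$$ Equivalently, the conics in $\mathbf{P}^2_{k(u,v)}$ given in homogeneous coordinates $S,T,R$ by $$v(v^2-1)S^2 - u(u^2-1)T^2 + uv(u^2-v^2)R^2 = 0 \quad\text{and}\quad S^2 - uT^2 - vR^2 = 0$$ are isomorphic over $k(u,v)$.
   Context: For a field $F$ of characteristic $\neq 2$ and $a,b\in F^\times$, $(a,b)\in\mathrm{Br}(F)$ denotes the class of the quaternion algebra with generators $x,y$ and relations $x^2=a$, $y^2=b$, $xy=-yx$. *)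

From HB Require Import structures.
From mathcomp Require Import all_boot all_order all_algebra.
Set Implicit Arguments. Unset Strict Implicit. Unset Printing Implicit Defensive.
Import GRing.Theory.
Local Open Scope ring_scope.

(* The quaternion algebra (a,b) over a field K, realised concretely on K^4:
   (c0,c1,c2,c3) stands for c0 + c1 x + c2 y + c3 xy, with
   x^2 = a, y^2 = b, xy = -yx. *)
Definition quat (K : fieldType) := (K * K * K * K)%type.

Definition qone (K : fieldType) : quat K := (1, 0, 0, 0).

Definition qadd (K : fieldType) (p q : quat K) : quat K :=
  let: (p0, p1, p2, p3) := p in let: (q0, q1, q2, q3) := q in
  (p0 + q0, p1 + q1, p2 + q2, p3 + q3).

Definition qscale (K : fieldType) (k : K) (p : quat K) : quat K :=
  let: (p0, p1, p2, p3) := p in (k * p0, k * p1, k * p2, k * p3).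

Definition qmul (K : fieldType) (a b : K) (p q : quat K) : quat K :=
  let: (p0, p1, p2, p3) := p in let: (q0, q1, q2, q3) := q in
  (p0 * q0 + a * p1 * q1 + b * p2 * q2 - a * b * p3 * q3,
   p0 * q1 + p1 * q0 - b * p2 * q3 + b * p3 * q2,
   p0 * q2 + p2 * q0 + a * p1 * q3 - a * p3 * q1,
   p0 * q3 + p3 * q0 + p1 * q2 - p2 * q1).

Definition quat_alg_iso (K : fieldType) (a b c d : K) (f : quat K -> quat K) :=
  [/\ forall (k : K) (p q : quat K), f (qadd p (qscale k q)) = qadd (f p) (qscale k (f q)),
      bijective f,
      f (qone K) = qone K &
      forall p q : quat K, f (qmul a b p q) = qmul c d (f p) (f q)].

(* Equality of the classes (a,b) = (c,d) in Br(K): since both algebras are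
   central simple of dimension 4, this is isomorphism of K-algebras. *)
Definition quat_class_eq (K : fieldType) (a b c d : K) : Prop :=
  exists f : quat K -> quat K, quat_alg_iso a b c d f.

Definition ratfun2 (F : fieldType) := {fraction {poly {poly F}}}.
Definition var_u (F : fieldType) : ratfun2 F := (@FracField.tofrac _ (('X : {poly F})%:P)).
Definition var_v (F : fieldType) : ratfun2 F := (@FracField.tofrac _ ('X : {poly {poly F}})).

From HB Require Import structures.
From mathcomp Require Import all_boot all_order all_algebra.
From mathcomp Require Import ring.
Set Implicit Arguments. Unset Strict Implicit. Unset Printing Implicit Defensive.
Import GRing.Theory.
Local Open Scope ring_scope.

(* Two quaternion algebras (a,b) and (c,d) over a field K are
   isomorphic as soon as (c,d) contains anticommuting elements X, Y with
   X^2 = a and Y^2 = b such that 1, X, Y, XY form a basis: the linear map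
   sending 1, x, y, xy to 1, X, Y, XY is then multiplicative, because the
   multiplication table of (a,b) is forced by the three relations. *)

Ltac quat_destruct :=
  repeat match goal with p : quat _ |- _ => revert p end;
  repeat intros [[[? ?] ?] ?].

Ltac quat_ring :=
  quat_destruct; rewrite /qmul /qadd /qscale /qone /=; congr (_, _, _, _); ring.

Section QuaternionArithmetic.
Variables (K : fieldType) (c d : K).
Local Notation qm := (qmul c d).

Lemma qmulA (p q r : quat K) : qm (qm p q) r = qm p (qm q r).
Proof. quat_ring. Qed.

Lemma qmulDl (p q r : quat K) : qm (qadd p q) r = qadd (qm p r) (qm q r).
Proof. quat_ring. Qed.

Lemma qmulDr (p q r : quat K) : qm p (qadd q r) = qadd (qm p q) (qm p r).
Proof. quat_ring. Qed.

Lemma qmulZl (k : K) (p q : quat K) : qm (qscale k p) q = qscale k (qm p q).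
Proof. quat_ring. Qed.

Lemma qmulZr (k : K) (p q : quat K) : qm p (qscale k q) = qscale k (qm p q).
Proof. quat_ring. Qed.

Lemma qmul1l (q : quat K) : qm (qone K) q = q.
Proof. quat_ring. Qed.

Lemma qmul1r (q : quat K) : qm q (qone K) = q.
Proof. quat_ring. Qed.

Lemma qscaleA (k l : K) (q : quat K) : qscale k (qscale l q) = qscale (k * l) q.
Proof. quat_ring. Qed.

End QuaternionArithmetic.

Section QuaternionPair.
Variables (K : fieldType) (a b c d : K) (X Y : quat K).
Local Notation qm := (qmul c d).

Definition qemb (p : quat K) : quat K :=
  let: (p0, p1, p2, p3) := p in
  qadd (qadd (qadd (qscale p0 (qone K)) (qscale p1 X)) (qscale p2 Y))
       (qscale p3 (qm X Y)).

Lemma qemb_linear (k : K) (p q : quat K) :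
  qemb (qadd p (qscale k q)) = qadd (qemb p) (qscale k (qemb q)).
Proof. rewrite /qemb; quat_ring. Qed.

Lemma qemb_one : qemb (qone K) = qone K.
Proof. rewrite /qemb; quat_ring. Qed.

Hypotheses (XX : qm X X = qscale a (qone K))
           (YY : qm Y Y = qscale b (qone K))
           (YX : qm Y X = qscale (-1) (qm X Y)).

(* The relations determine the whole multiplication table of 1, X, Y, Z = XY,
   which is that of (a,b); by bilinearity qemb is multiplicative. *)
Lemma qemb_mul (p q : quat K) : qemb (qmul a b p q) = qm (qemb p) (qemb q).
Proof.
set Z := qm X Y.
have XZ : qm X Z = qscale a Y by rewrite -qmulA XX qmulZl qmul1l.
have ZY : qm Z Y = qscale b X by rewrite qmulA YY qmulZr qmul1r.
have YZ : qm Y Z = qscale (-b) X by rewrite -qmulA YX qmulZl ZY qscaleA mulN1r.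
have ZX : qm Z X = qscale (-a) Y by rewrite qmulA YX qmulZr XZ qscaleA mulN1r.
have ZZ : qm Z Z = qscale (- (a * b)) (qone K).
  by rewrite {1}/Z qmulA YZ qmulZr XX qscaleA mulNr mulrC.
move: p q => [[[p0 p1] p2] p3] [[[q0 q1] q2] q3]; rewrite /qemb -/Z.
rewrite !qmulDl !qmulDr !qmulZl !qmulZr XX YY YX -/Z XZ ZY YZ ZX ZZ.
rewrite !qmul1l !qmul1r; clearbody Z; clear -X Y Z; quat_ring.
Qed.

Lemma quat_class_eq_of_pair (g : quat K -> quat K) :
  cancel qemb g -> cancel g qemb -> quat_class_eq a b c d.
Proof.
move=> embK gK; exists qemb; split.
- exact: qemb_linear.
- by exists g.
- exact: qemb_one.
- exact: qemb_mul.
Qed.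

End QuaternionPair.

Section ConicPair.
Variables (K : fieldType) (u v I : K).
Hypotheses (hI : I ^+ 2 = -1) (nu : u != 0) (nv : v != 0)
  (nu2 : u ^+ 2 - 1 != 0) (nv2 : v ^+ 2 - 1 != 0) (nvu : v ^+ 2 - u ^+ 2 != 0).

Let a := u * v * (u ^+ 2 - 1) * (v ^+ 2 - 1).
Let b := u * (v ^+ 2 - 1) * (v ^+ 2 - u ^+ 2).

Definition conicX : quat K :=
  (0, v * (1 + I) * (1 + u), u * (1 - I) * (1 + v), u - v - I + I * u * v).
Definition conicY : quat K :=
  (0, - (I * v + v ^+ 2 + u + I * u * v), - ((1 - I) * u * (1 + v)),
   (1 + I) * (v - u)).

Lemma conicX_sqr : qmul u v conicX conicX = qscale a (qone K).
Proof. rewrite /qmul /qscale /qone /=; congr (_, _, _, _); rewrite /a; ring: hI. Qed.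

Lemma conicY_sqr : qmul u v conicY conicY = qscale b (qone K).
Proof. rewrite /qmul /qscale /qone /=; congr (_, _, _, _); rewrite /b; ring: hI. Qed.

Lemma conicYX : qmul u v conicY conicX = qscale (-1) (qmul u v conicX conicY).
Proof. rewrite /qmul /qscale /qone /=; congr (_, _, _, _); ring: hI. Qed.

Definition qscalar (q : quat K) : K := let: (q0, _, _, _) := q in q0.

(* Coordinates on the basis 1, X, Y, XY, read off through the scalar parts of
   w, wX, wY, wXY (the basis is orthogonal for the trace form). *)
Definition conic_coords (w : quat K) : quat K :=
  (qscalar w, qscalar (qmul u v w conicX) / a, qscalar (qmul u v w conicY) / b,
   - qscalar (qmul u v w (qmul u v conicX conicY)) / (a * b)).

Lemma conic_coordsK : cancel (qemb u v conicX conicY) conic_coords.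
Proof.
case=> [[[p0 p1] p2] p3].
rewrite /qemb /conic_coords /qscalar /conicX /conicY /qmul /qadd /qscale /qone /=.
congr (_, _, _, _); rewrite /a /b; field: hI; rewrite ?nu ?nv ?nu2 ?nv2 ?nvu //.
Qed.

Lemma conic_coordsVK : cancel conic_coords (qemb u v conicX conicY).
Proof.
case=> [[[p0 p1] p2] p3].
rewrite /qemb /conic_coords /qscalar /conicX /conicY /qmul /qadd /qscale /qone /=.
congr (_, _, _, _); rewrite /a /b; field: hI; rewrite ?nu ?nv ?nu2 ?nv2 ?nvu //.
Qed.

Lemma conic_quat_class_eq : quat_class_eq a b u v.
Proof.
exact: (quat_class_eq_of_pair conicX_sqr conicY_sqr conicYX
          conic_coordsK conic_coordsVK).
Qed.

End ConicPair.

Section RationalFunctions.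
Variable F : fieldType.
Local Notation tofrac := (@FracField.tofrac {poly {poly F}}).

Lemma tofrac_neq0_eval (p : {poly {poly F}}) (x : {poly F}) (y : F) :
  p.[x].[y] != 0 -> tofrac p != 0.
Proof. by rewrite tofrac_eq0; apply: contra => /eqP ->; rewrite !horner0. Qed.

Lemma var_u_neq0 : var_u F != 0.
Proof. by apply: (@tofrac_neq0_eval _ 0 1); rewrite hornerC hornerX oner_eq0. Qed.

Lemma var_v_neq0 : var_v F != 0.
Proof. by apply: (@tofrac_neq0_eval _ 1 0); rewrite hornerX hornerC oner_eq0. Qed.

Lemma var_u_sqr_sub1_neq0 : var_u F ^+ 2 - 1 != 0.
Proof.
rewrite /var_u -rmorphXn -(rmorph1 tofrac) -rmorphB.
apply: (@tofrac_neq0_eval _ 0 0).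
by rewrite !hornerE expr0n /= sub0r oppr_eq0 oner_eq0.
Qed.

Lemma var_v_sqr_sub1_neq0 : var_v F ^+ 2 - 1 != 0.
Proof.
rewrite /var_v -rmorphXn -(rmorph1 tofrac) -rmorphB.
apply: (@tofrac_neq0_eval _ 0 0).
by rewrite !hornerE expr0n /= sub0r oppr_eq0 oner_eq0.
Qed.

Lemma var_v_sqr_sub_u_sqr_neq0 : var_v F ^+ 2 - var_u F ^+ 2 != 0.
Proof.
rewrite /var_v /var_u -!rmorphXn -rmorphB.
apply: (@tofrac_neq0_eval _ 0 1).
by rewrite !hornerE expr0n expr1n /= sub0r oppr_eq0 oner_eq0.
Qed.

Lemma const_sqrt_neg1 (i : F) : i ^+ 2 = -1 -> tofrac (i%:P)%:P ^+ 2 = -1.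
Proof. by move=> hi; rewrite -!rmorphXn hi !rmorphN1. Qed.

End RationalFunctions.

Theorem mainTheorem2 (F : fieldType) (h2 : (2%:R : F) != 0)
  (hi : exists i : F, i ^+ 2 = -1) :
  let u := var_u F in let v := var_v F in
  quat_class_eq (u * v * (u ^+ 2 - 1) * (v ^+ 2 - 1))
                (u * (v ^+ 2 - 1) * (v ^+ 2 - u ^+ 2))
                u v.
Proof.
case: hi => i hi u v.
exact: (conic_quat_class_eq (const_sqrt_neg1 hi) (var_u_neq0 F) (var_v_neq0 F)
  (var_u_sqr_sub1_neq0 F) (var_v_sqr_sub1_neq0 F) (var_v_sqr_sub_u_sqr_neq0 F)).
Qed.
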